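(* For every integer $k\ge6$ and every real $r>1$ there is a constant $c>0$ such that for every even integer $n\ge2$ there exists a unit disk graph $G=(V,E)$ with $|V|=n$ such that each of the Yao-Yao graph $YY_k$, the Yao-Sink graph $YS_k$, and the Yao-Sparse-Sink graph $YES_k$ (with parameter $r$) of $G$ has weight at least $c\,n\cdot wt(MST(V))$.
   Context: Unit disk graph: $V$ a finite point set in the plane, $E=\{uv:|uv|\le1\}$ with $|uv|$ Euclidean distance. $wt(H)$ is the sum of Euclidean lengths of the edges of $H$ (viewed as an undirected graph); $MST(V)$ is a Euclidean minimum spanning tree of $V$. Cones: with $\theta=2\pi/k$, at each point $x$ the plane is partitioned into $k$ half-open half-closed cones with apex $x$ of angle $\theta$, bounded by $k$ equally spaced rays (same directions at every node). Identifiers: nodes have distinct IDs; $\mathrm{ID}(\overrightarrow{xy})=(|xy|,\mathrm{ID}(x),\mathrm{ID}(y))$ compared lexicographically; $\mathrm{ID}(xy)=\min\{\mathrm{ID}(\overrightarrow{xy}),\mathrm{ID}(\overrightarrow{yx})\}$. Yao step: for each node $x$ and each cone $K_x$ containing the other endpoint of some edge of $E$ incident to $x$, add to $E_Y$ the directed edge $\overrightarrow{xy}$ where $xy$ is such an edge with lowest $\mathrm{ID}(xy)$. Reverse Yao step: from $E_{YY}=E_Y$, for each node $v$ and each cone $K_v$, among edges $\overrightarrow{xv}\in E_Y$ with $x\in K_v$ keep only the one of smallest ID; $YY_k=(V,E_{YY})$. Sink step on a directed edge set $D$: for each node $v$ and cone $K_v$: let $I$ be the set of $x$ with $\overrightarrow{xv}\in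 D$, $x\in K_v$; set $I(v)\leftarrow I$, $J\leftarrow(v)$, $T(v)\leftarrow\emptyset$; repeat until $I$ is empty: remove the first vertex $x$ of $J$; for each cone $K_x$, let $w\in I(x)\cap K_x$ minimize $\mathrm{ID}(\overrightarrow{wx})$ (if any), add $\overrightarrow{wx}$ to $T(v)$, move $w$ from $I$ to $J$, set $I(w)\leftarrow I(x)\cap K_x$; output the union of all $T(v)$. $YS_k$ is the Sink step applied to $E_Y$. Filtering step (parameter $r>1$): for each node $v$ and cone $K_v$, let $F$ be the set of $\overrightarrow{xv}\in E_Y$ with $x\in K_v$; if nonempty let $\overrightarrow{uv}$ be its minimum-ID edge, let $F_i=\{\overrightarrow{ab}\in F:|uv|r^{i-1}\le|ab|<|uv|r^i\}$ for $i\ge1$, and put into $E_{YE}$ the smallest-ID edge of each nonempty $F_i$. $YES_k$ is the Sink step applied to $E_{YE}$. All outputs are viewed as undirected graphs. *)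

From HB Require Import structures.
From mathcomp Require Import all_boot all_order all_algebra.
From mathcomp Require Import all_classical all_reals all_analysis.
Set Implicit Arguments. Unset Strict Implicit. Unset Printing Implicit Defensive.
Import Order.TTheory GRing.Theory Num.Theory.
Local Open Scope ring_scope.

Section UDG.
Variable R : realType.
Variable k : nat.
Variable n : nat.          (* number of nodes; node x : 'I_n has ID = val x *)
Variable p : 'I_n -> R * R.

Definition dist (a b : R * R) : R := Num.sqrt ((a.1 - b.1) ^+ 2 + (a.2 - b.2) ^+ 2).
Definition d (x y : 'I_n) : R := dist (p x) (p y).

Definition theta : R := 2 * pi / k%:R.

Definition inCone (x : 'I_n) (j : nat) (y : 'I_n) : Prop :=
  (j < k)%N /\
  exists rho alpha : R, 0 < rho /\ j%:R * theta <= alpha < j.+1%:R * theta /\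
    (p y).1 - (p x).1 = rho * cos alpha /\ (p y).2 - (p x).2 = rho * sin alpha.

Definition udgE (x y : 'I_n) : Prop := x <> y /\ d x y <= 1.

Definition lexlt (a b : R * nat * nat) : bool :=
  (a.1.1 < b.1.1) || ((a.1.1 == b.1.1) &&
     ((a.1.2 < b.1.2)%N || ((a.1.2 == b.1.2) && (a.2 < b.2)%N))).
Definition lexle (a b : R * nat * nat) : bool := (a == b) || lexlt a b.
(* ID of the directed edge x -> y *)
Definition keyD (x y : 'I_n) : R * nat * nat := (d x y, nat_of_ord x, nat_of_ord y).
Definition keyU (x y : 'I_n) : R * nat * nat :=
  if lexle (keyD x y) (keyD y x) then keyD x y else keyD y x.

Definition EY (x y : 'I_n) : Prop :=
  udgE x y /\ exists j, inCone x j y /\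
    forall z, udgE x z -> inCone x j z -> lexle (keyU x y) (keyU x z).

Definition EYY (x v : 'I_n) : Prop :=
  EY x v /\ exists j, inCone v j x /\
    forall w, EY w v -> inCone v j w -> lexle (keyU x v) (keyU w v).

(* Sink step.  sinkT S x a b : the directed edge a -> b is produced when node x
   is processed with I(x) = S: for each cone K_x, the w in S /\ K_x of minimal
   ID(w -> x) gives the edge w -> x and is processed with I(w) = S /\ K_x. *)
Inductive sinkT : ('I_n -> Prop) -> 'I_n -> 'I_n -> 'I_n -> Prop :=
| SinkHere (S : 'I_n -> Prop) (x : 'I_n) (j : nat) (w : 'I_n) :
    S w -> inCone x j w ->
    (forall w', S w' -> inCone x j w' -> lexle (keyD w x) (keyD w' x)) ->
    sinkT S x w x
| SinkDeep (S : 'I_n -> Prop) (x : 'I_n) (j : nat) (w a b : 'I_n) :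
    S w -> inCone x j w ->
    (forall w', S w' -> inCone x j w' -> lexle (keyD w x) (keyD w' x)) ->
    sinkT (fun z => S z /\ inCone x j z) w a b ->
    sinkT S x a b.

Definition SinkStep (D : 'I_n -> 'I_n -> Prop) (a b : 'I_n) : Prop :=
  exists v j, sinkT (fun x => D x v /\ inCone v j x) v a b.

Variable r : R.
Definition inF (v : 'I_n) (j : nat) (a : 'I_n) : Prop := EY a v /\ inCone v j a.
Definition band (u v : 'I_n) (i : nat) (a : 'I_n) : Prop :=
  d u v * r ^+ i.-1 <= d a v < d u v * r ^+ i.
Definition EYE (x v : 'I_n) : Prop :=
  exists (j : nat) (u : 'I_n) (i : nat),
    inF v j x /\ inF v j u /\
    (forall u', inF v j u' -> lexle (keyD u v) (keyD u' v)) /\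
    (1 <= i)%N /\ band u v i x /\
    (forall y, inF v j y -> band u v i y -> lexle (keyD x v) (keyD y v)).

Definition undirRel (H : 'I_n -> 'I_n -> Prop) : rel 'I_n :=
  fun a b => `[< H a b \/ H b a >].
Definition wt (H : 'I_n -> 'I_n -> Prop) : R :=
  \sum_(a : 'I_n) \sum_(b : 'I_n | (a < b)%N && undirRel H a b) d a b.

Definition spanningTree (T : 'I_n -> 'I_n -> Prop) : Prop :=
  (forall a b, connect (undirRel T) a b) /\
  #|[set ab : 'I_n * 'I_n | (ab.1 < ab.2)%N && undirRel T ab.1 ab.2]| = n.-1.

Definition isMST (T : 'I_n -> 'I_n -> Prop) : Prop :=
  spanningTree T /\ forall T', spanningTree T' -> wt T <= wt T'.

End UDG.

(* Put n/2 nodes a_i = (i/n, 0) on a short segment and n/2 nodes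
   b_i = a_i + (cos beta, sin beta), with beta = (k/2 - 1) theta.  The path
   a_0 ... a_{n/2-1} b_0 ... b_{n/2-1} has weight at most 7, which bounds
   wt(MST).  At a_i the direction beta lies in cone k/2 - 1, where every other
   b_j is farther than |a_i b_i| = 1, so a_i -> b_i is a Yao edge; at b_i the
   opposite direction beta + pi lies in a cone containing only a-nodes, all at
   distance at least sin beta.  Each of YY_k, YS_k and YES_k keeps some
   incoming Yao edge in every cone that has one, so every b_i receives an edge
   of length at least sin beta, and the weight is at least
   (n/2) sin beta >= (sin beta / 14) n wt(MST). *)

From HB Require Import structures.
From mathcomp Require Import all_boot all_order all_algebra.
From mathcomp Require Import all_classical all_reals all_analysis.
From mathcomp Require Import zify ring lra.
Import Order.TTheory GRing.Theory Num.Theory.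
Local Open Scope ring_scope.

Section LexOrder.
Variable R : realType.
Implicit Types a b c : R * nat * nat.

Lemma lexle_refl a : lexle a a.
Proof. by rewrite /lexle eqxx. Qed.

Lemma lexle_total a b : lexle a b || lexle b a.
Proof.
case: a => [[x i] j]; case: b => [[y i'] j']; rewrite /lexle /lexlt /=.
case: (ltgtP x y) => //= [_|_|<-]; rewrite ?orbT //.
rewrite !xpair_eqE eqxx /=.
by case: (ltngtP i i') => //= _; case: (ltngtP j j') => //= ->; rewrite eqxx.
Qed.

Lemma lexle_trans a b c : lexle a b -> lexle b c -> lexle a c.
Proof.
case: a => [[x i] j]; case: b => [[y i'] j']; case: c => [[z i''] j''].
rewrite /lexle /lexlt /= !xpair_eqE.
case/orP=> [/andP[/andP[/eqP-> /eqP->] /eqP->] //|H1].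
case/orP=> [/andP[/andP[/eqP<- /eqP<-] /eqP<-]|H2]; first by rewrite H1 orbT.
apply/orP; right.
case/orP: H1 => [H1|/andP[/eqP e1 H1]]; case/orP: H2 => [H2|/andP[/eqP e2 H2]].
- by rewrite (lt_trans H1 H2).
- by rewrite -e2 H1.
- by rewrite e1 H2.
subst y z; rewrite eqxx ltxx /=.
case/orP: H1 => [H1|/andP[/eqP e1 H1]]; case/orP: H2 => [H2|/andP[/eqP e2 H2]].
- by rewrite (ltn_trans H1 H2).
- by rewrite -e2 H1.
- by rewrite e1 H2.
- by subst; rewrite eqxx (ltn_trans H1 H2) orbT.
Qed.

Lemma lexle_lt_fst a b : a.1.1 < b.1.1 -> lexle a b.
Proof. by move=> H; rewrite /lexle /lexlt H orbT. Qed.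

End LexOrder.

Lemma seq_total_preorder_min (T : eqType) (le : rel T) (s : seq T) :
  reflexive le -> total le -> transitive le ->
  s != [::] -> exists2 w, w \in s & forall w', w' \in s -> le w w'.
Proof.
move=> le_refl le_total le_trans; elim: s => [//|x s IH] _.
have [->|/IH [w ws Hw]] := eqVneq s [::].
  by exists x; rewrite ?mem_head // => w'; rewrite inE => /eqP->.
case/orP: (le_total x w) => [le_xw|le_wx].
- exists x; first exact: mem_head.
  by move=> w'; rewrite inE => /orP[/eqP->//|/Hw]; apply: le_trans.
- exists w; first by rewrite inE ws orbT.
  by move=> w'; rewrite inE => /orP[/eqP->//|/Hw].
Qed.

Lemma exists_lexle_min {R : realType} {T : finType} {P : T -> Prop}
    (f : T -> R * nat * nat) :
  (exists x, P x) -> exists w, P w /\ forall w', P w' -> lexle (f w) (f w').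
Proof.
move=> [x Px]; set s := [seq y <- enum T | `[< P y >]].
have mem_s y : (y \in s) = `[< P y >] by rewrite mem_filter mem_enum andbT.
have xs : x \in s by rewrite mem_s; apply/asboolP.
have s_neq0 : s != [::] by apply: contraTneq xs => ->.
have [w] := @seq_total_preorder_min _ (fun a b => lexle (f a) (f b)) s
  (fun a => @lexle_refl R (f a)) (fun a b => @lexle_total R (f a) (f b))
  (fun b a c => @lexle_trans R (f a) (f b) (f c)) s_neq0.
rewrite mem_s => /asboolP Pw Hw; exists w; split => // w' Pw'.
by apply: Hw; rewrite mem_s; apply/asboolP.
Qed.

Section Distance.
Variable R : realType.
Implicit Types a b : R * R.

Lemma dist_sym a b : dist a b = dist b a.
Proof. by rewrite /dist -(sqrrN (a.1 - b.1)) opprB -(sqrrN (a.2 - b.2)) opprB. Qed.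

Lemma dist_ge0 a b : 0 <= dist a b.
Proof. exact: sqrtr_ge0. Qed.

Lemma dist_le_l1 a b : dist a b <= `|a.1 - b.1| + `|a.2 - b.2|.
Proof.
rewrite /dist; set x := a.1 - b.1; set y := a.2 - b.2.
have h : 0 <= `|x| + `|y| by rewrite addr_ge0.
rewrite -(ger0_norm h) -sqrtr_sqr ler_sqrt ?sqr_ge0 //.
rewrite -(real_normK (num_real x)) -(real_normK (num_real y)).
have := normr_ge0 x; have := normr_ge0 y; nra.
Qed.

Lemma dist_ge_abs2 a b : `|a.2 - b.2| <= dist a b.
Proof.
rewrite /dist -sqrtr_sqr ler_sqrt; last by rewrite addr_ge0 ?sqr_ge0.
by rewrite lerDr sqr_ge0.
Qed.

End Distance.

Section Weight.
Variables (R : realType) (n : nat) (p : 'I_n -> R * R).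

Lemma keyU_fst x y : (keyU p x y).1.1 = d p x y.
Proof. by rewrite /keyU; case: ifP => _ //=; rewrite /d dist_sym. Qed.

Lemma wt_ge_heads (H : 'I_n -> 'I_n -> Prop) m (head : 'I_m -> 'I_n) (s : R) :
  injective head ->
  (forall i, exists w : 'I_n, (w < head i)%N /\ H w (head i) /\ s <= d p w (head i)) ->
  m%:R * s <= wt p H.
Proof.
move=> head_inj head_edge; rewrite /wt.
under eq_bigr do rewrite big_mkcond /=.
rewrite exchange_big /=.
set F := fun b : 'I_n =>
  \sum_(a : 'I_n) (if (a < b)%N && undirRel H a b then d p a b else 0).
rewrite -/(\sum_b F b).
have F_ge0 v : 0 <= F v.
  by apply: sumr_ge0 => a _; case: ifP => _ //; exact: dist_ge0.
have F_head i : s <= F (head i).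
  have [w [w_lt [Hw sw]]] := head_edge i.
  rewrite /F (bigD1 w) //= ifT; last by rewrite w_lt; apply/asboolP; left.
  by apply: le_trans sw _; rewrite lerDl sumr_ge0 // => a _; case: ifP => _ //; exact: dist_ge0.
rewrite (bigID (mem [set head i | i : 'I_m])) big_imset /=; last by move=> ? ? _ _ /head_inj.
apply: le_trans (_ : \sum_(i : 'I_m) F (head i) <= _); last by rewrite lerDl sumr_ge0.
have -> : m%:R * s = \sum_(i < m) s by rewrite sumr_const card_ord mulr_natl.
by apply: ler_sum => i _; exact: F_head.
Qed.

End Weight.

Section PathTree.
Variable n : nat.
Hypothesis n_gt0 : (0 < n)%N.

Definition path_rel (x y : 'I_n) : Prop := nat_of_ord y = (nat_of_ord x).+1.

Lemma path_rel_connect a b : connect (undirRel path_rel) a b.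
Proof.
have sym : symmetric (undirRel path_rel).
  by move=> x y; apply/asboolP/asboolP; tauto.
pose x0 : 'I_n := Ordinal n_gt0.
have from_x0 i (hi : (i < n)%N) : connect (undirRel path_rel) x0 (Ordinal hi).
  elim: i hi => [|i IH] hi; first by rewrite (_ : Ordinal hi = x0) //; apply: val_inj.
  apply: connect_trans (IH (ltnW hi)) (connect1 _).
  by apply/asboolP; left.
have ord_eta (x : 'I_n) : Ordinal (ltn_ord x) = x by apply: val_inj.
have := from_x0 _ (ltn_ord a); have := from_x0 _ (ltn_ord b); rewrite !ord_eta.
by move=> x0b x0a; apply: connect_trans _ x0b; rewrite sym_connect_sym.
Qed.

Lemma path_low_lt (i : 'I_n.-1) : (i < n)%N.
Proof. by have := ltn_ord i; lia. Qed.

Lemma path_high_lt (i : 'I_n.-1) : (i.+1 < n)%N.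
Proof. by rewrite -ltn_predRL. Qed.

Definition path_edge (i : 'I_n.-1) : 'I_n * 'I_n :=
  (Ordinal (path_low_lt i), Ordinal (path_high_lt i)).

Lemma card_path_edges :
  #|[set ab : 'I_n * 'I_n | (ab.1 < ab.2)%N && undirRel path_rel ab.1 ab.2]| = n.-1.
Proof.
have -> : [set ab : 'I_n * 'I_n | (ab.1 < ab.2)%N && undirRel path_rel ab.1 ab.2]
    = [set path_edge i | i : 'I_n.-1].
  apply/setP => [[a b]]; rewrite inE /=; apply/idP/imsetP.
  - move=> /andP[lt_ab /asboolP]; rewrite /path_rel => -[ba|ab]; last by lia.
    have a_lt : (a < n.-1)%N by have := ltn_ord b; lia.
    by exists (Ordinal a_lt) => //; congr (_, _); apply: val_inj.
  - by move=> [i _ [-> ->]] /=; rewrite ltnSn; apply/asboolP; left.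
rewrite card_imset ?card_ord // => i j /(congr1 (fun e => val e.1)) /=.
exact: val_inj.
Qed.

Lemma path_rel_spanning : spanningTree path_rel.
Proof. by split; [exact: path_rel_connect | exact: card_path_edges]. Qed.

Lemma wt_path_rel_le {R : realType} (p : 'I_n -> R * R) (g : 'I_n -> R) :
  (forall a, 0 <= g a) -> (forall a b, path_rel a b -> d p a b <= g a) ->
  wt p path_rel <= \sum_a g a.
Proof.
move=> g_ge0 g_edge; rewrite /wt; apply: ler_sum => a _.
have [a_succ|a_last] := ltnP a.+1 n; last first.
  rewrite big_pred0 // => b; apply/negbTE/negP => /andP[lt_ab /asboolP].
  by rewrite /path_rel => -[]; have := ltn_ord b; lia.
pose b0 : 'I_n := Ordinal a_succ.
rewrite (eq_bigl (pred1 b0)) ?big_pred1_eq; first exact: g_edge.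
move=> b /=; apply/idP/eqP => [/andP[lt_ab /asboolP]|->].
- by rewrite /path_rel => -[ba|ab]; [apply: val_inj|lia].
- by rewrite /= ltnSn; apply/asboolP; left.
Qed.

End PathTree.

Section ConeSelection.
Variables (R : realType) (k n : nat) (p : 'I_n -> R * R).

Lemma inCone_dist_gt0 x j y : inCone k p x j y -> 0 < d p y x.
Proof.
move=> [_ [rho [al [rho_gt0 [_ [e1 e2]]]]]].
rewrite /d /dist e1 e2 !exprMn -mulrDr cos2Dsin2 mulr1.
by rewrite sqrtr_sqr gtr0_norm.
Qed.

Lemma EYY_in_cone v j :
  (exists x, EY k p x v /\ inCone k p v j x) ->
  exists w, inCone k p v j w /\ EYY k p w v.
Proof.
move=> /(exists_lexle_min (fun w => keyU p w v)) [w [[Yw Cw] w_min]].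
exists w; split => //; split => //; exists j; split => // w' Yw' Cw'.
exact: w_min.
Qed.

Lemma SinkStep_in_cone (D : 'I_n -> 'I_n -> Prop) v j :
  (exists x, D x v /\ inCone k p v j x) ->
  exists w, inCone k p v j w /\ SinkStep k p D w v.
Proof.
move=> /(exists_lexle_min (fun w => keyD p w v)) [w [[Dw Cw] w_min]].
exists w; split => //; exists v, j.
by apply: (SinkHere (j := j)) => // w' Dw' Cw'; apply: w_min.
Qed.

Lemma EYE_in_cone (r : R) v j : 1 < r ->
  (exists x, EY k p x v /\ inCone k p v j x) ->
  exists x, EYE k p r x v /\ inCone k p v j x.
Proof.
move=> r_gt1 /(exists_lexle_min (fun w => keyD p w v)) [u [Fu u_min]].
have u_band : band p r u v 1 u.
  rewrite /band expr0 expr1 mulr1 lexx /= -subr_gt0.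
  have := inCone_dist_gt0 _ _ _ Fu.2; nra.
have [x [[Fx Bx] x_min]] := exists_lexle_min (fun w => keyD p w v)
  (ex_intro (fun y => inF k p v j y /\ band p r u v 1 y) u (conj Fu u_band)).
exists x; split; last exact: Fx.2.
exists j, u, 1%N; split => //; split => //.
split; first by move=> u' Fu'; apply: u_min.
by do 2 split => //; move=> y Fy By; apply: x_min.
Qed.

End ConeSelection.

Section Construction.
Variables (R : realType) (k : nat).
Hypothesis k_ge6 : (6 <= k)%N.

Definition half_k := (k %/ 2)%N.
Definition cone_up := half_k.-1.
Definition cone_down := (cone_up + half_k)%N.
Definition beta : R := cone_up%:R * theta R k.

Lemma half_k_ge3 : (3 <= half_k)%N.
Proof. rewrite /half_k; lia. Qed.

Lemma theta_bounds : let th := theta R k in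
  [/\ 0 < th, half_k%:R * th <= pi, pi < (half_k%:R + 1) * th & 3 <= half_k%:R :> R].
Proof.
have k_ge : 2 * half_k%:R <= k%:R :> R.
  by rewrite -natrM ler_nat /half_k; lia.
have k_lt : k%:R < 2 * half_k%:R + 2 :> R.
  by rewrite -natrM -natrD ltr_nat /half_k; lia.
have q_ge3 : 3 <= half_k%:R :> R by rewrite (ler_nat R 3) half_k_ge3.
have k_gt0 : 0 < k%:R :> R by rewrite ltr0n; lia.
have pi_gt0 := @pi_gt0 R.
have th_k : theta R k * k%:R = 2 * pi by rewrite /theta; field; lra.
have th_gt0 : 0 < theta R k by rewrite /theta divr_gt0 //; lra.
by split => //; nra.
Qed.

Lemma cone_upS : cone_up.+1 = half_k.
Proof. by rewrite /cone_up prednK // (leq_trans _ half_k_ge3). Qed.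
Lemma cone_upSE : cone_up.+1%:R = half_k%:R :> R.
Proof. by rewrite cone_upS. Qed.
Lemma cone_upE : cone_up%:R = half_k%:R - 1 :> R.
Proof. by rewrite -cone_upSE -natr1 addrK. Qed.
Lemma cone_downE : cone_down%:R = 2 * half_k%:R - 1 :> R.
Proof. by rewrite /cone_down natrD cone_upE; ring. Qed.
Lemma cone_downSE : cone_down.+1%:R = 2 * half_k%:R :> R.
Proof. by rewrite -natr1 cone_downE; ring. Qed.
Lemma cone_up_lt : (cone_up < k)%N.
Proof. rewrite /cone_up /half_k; lia. Qed.
Lemma cone_down_lt : (cone_down < k)%N.
Proof. rewrite /cone_down /cone_up /half_k; lia. Qed.

Lemma sin_beta_gt0 : 0 < sin beta.
Proof.
have [? ? ? ?] := theta_bounds.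
by apply: sin_gt0_pi; rewrite /beta cone_upE; apply/andP; split; nra.
Qed.

Lemma cos_beta_le0 : cos beta <= 0.
Proof.
have [? ? ? ?] := theta_bounds.
rewrite -[beta](subrK (pi / 2)) cosDpihalf oppr_le0; apply: sin_ge0_pi.
by rewrite /beta cone_upE; apply/andP; split; nra.
Qed.

Lemma beta_in_cone_up :
  cone_up%:R * theta R k <= beta < cone_up.+1%:R * theta R k.
Proof.
have [? ? ? ?] := theta_bounds.
by rewrite /beta lexx /= cone_upSE cone_upE; nra.
Qed.

Lemma beta_pi_in_cone_down :
  cone_down%:R * theta R k <= beta + pi < cone_down.+1%:R * theta R k.
Proof.
have [? ? ? ?] := theta_bounds.
by rewrite cone_downE cone_downSE /beta cone_upE; apply/andP; split; nra.
Qed.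

Lemma sin_cone_up a : cone_up%:R * theta R k <= a < cone_up.+1%:R * theta R k ->
  0 < sin a /\ 0 <= sin (a - beta).
Proof.
have [? ? ? ?] := theta_bounds.
rewrite cone_upE cone_upSE => /andP[? ?]; split.
- by apply: sin_gt0_pi; apply/andP; split; nra.
- by apply: sin_ge0_pi; rewrite /beta cone_upE; apply/andP; split; nra.
Qed.

Lemma sin_cone_down a : cone_down%:R * theta R k <= a < cone_down.+1%:R * theta R k ->
  sin a < 0.
Proof.
have [? ? ? ?] := theta_bounds.
rewrite cone_downE cone_downSE => /andP[? ?].
rewrite -[a](subrK pi) sinDpi oppr_lt0; apply: sin_gt0_pi.
by apply/andP; split; nra.
Qed.

Variable n : nat.
Hypotheses (n_even : ~~ odd n) (n_ge2 : (2 <= n)%N).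

Definition half_n := (n %/ 2)%N.
Definition gap : R := n%:R^-1.

Definition config (x : 'I_n) : R * R :=
  if (x < half_n)%N then (x%:R * gap, 0)
  else ((x - half_n)%:R * gap + cos beta, sin beta).

Lemma config_low {x : 'I_n} : (x < half_n)%N -> config x = (x%:R * gap, 0).
Proof. by rewrite /config => ->. Qed.

Lemma config_high {x : 'I_n} : (half_n <= x)%N ->
  config x = ((x - half_n)%:R * gap + cos beta, sin beta).
Proof. by rewrite /config ltnNge => ->. Qed.

Lemma n_halves : n = (half_n + half_n)%N.
Proof. by have := modn2 n; rewrite (negbTE n_even) /half_n; lia. Qed.

Lemma half_n_gt0 : (0 < half_n)%N.
Proof. by have := n_halves; lia. Qed.

Lemma gap_gt0 : 0 < gap.
Proof. by rewrite /gap invr_gt0 ltr0n; lia. Qed.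

Lemma gap_mul_inj (i j : nat) : i%:R * gap = j%:R * gap -> i = j.
Proof. by move/(mulIf (lt0r_neq0 gap_gt0))/eqP; rewrite eqr_nat => /eqP. Qed.

Lemma high_inj (x y : 'I_n) : (half_n <= x)%N -> (half_n <= y)%N ->
  (x - half_n)%N = (y - half_n)%N -> x = y.
Proof. by move=> hx hy e; apply: val_inj => /=; rewrite -(subnK hx) -(subnK hy) e. Qed.

Lemma config_inj : injective config.
Proof.
have sb := sin_beta_gt0.
move=> x y E; have e1 := congr1 fst E; have e2 := congr1 snd E; move: e1 e2.
rewrite /config; case: ifP => hx; case: ifP => hy /= e1 e2.
- by apply: val_inj; apply: gap_mul_inj.
- by move: sb; rewrite e2 ltxx.
- by move: sb; rewrite -e2 ltxx.
- move: hx hy => /negbT; rewrite -leqNgt => hx /negbT; rewrite -leqNgt => hy.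
  by apply: high_inj => //; apply: gap_mul_inj; exact: addIr e1.
Qed.

Definition partner (v : 'I_n) : 'I_n :=
  Ordinal (leq_ltn_trans (leq_subr half_n v) (ltn_ord v)).

Lemma partner_low {v : 'I_n} : (half_n <= v)%N -> (partner v < half_n)%N.
Proof. by move=> hv /=; have := n_halves; have := ltn_ord v; lia. Qed.

Lemma partner_dist {v : 'I_n} : (half_n <= v)%N -> d config (partner v) v = 1.
Proof.
move=> hv; rewrite /d /dist (config_low (partner_low hv)) (config_high hv) /=.
set X := _ * gap.
rewrite (_ : X - (X + cos beta) = - cos beta); last by ring.
by rewrite sub0r !sqrrN cos2Dsin2 sqrtr1.
Qed.

Lemma partner_in_cone_down (v : 'I_n) : (half_n <= v)%N ->
  inCone k config v cone_down (partner v).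
Proof.
move=> hv; split; first exact: cone_down_lt.
exists 1, (beta + pi); split; first exact: ltr01.
split; first exact: beta_pi_in_cone_down.
by rewrite (config_low (partner_low hv)) (config_high hv) /= cosDpi sinDpi; split; ring.
Qed.

Lemma cone_down_low {v y : 'I_n} : (half_n <= v)%N -> inCone k config v cone_down y ->
  (y < half_n)%N /\ sin beta <= d config y v.
Proof.
move=> hv [_ [rho [al [rho_gt0 [al_cone [_ e2]]]]]].
have sb := sin_beta_gt0; have sal := sin_cone_down _ al_cone.
rewrite (config_high hv) /= in e2.
have [hy|hy] := ltnP y half_n; last by rewrite (config_high hy) /= in e2; nra.
split => //; apply: le_trans (dist_ge_abs2 _ _ _).
by rewrite (config_low hy) (config_high hv) /= sub0r normrN ger0_norm // ltW.
Qed.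

Lemma cone_up_partner_far (v z : 'I_n) : (half_n <= v)%N ->
  inCone k config (partner v) cone_up z -> z <> v -> 1 < d config (partner v) z.
Proof.
move=> hv [_ [rho [al [rho_gt0 [al_cone [e1 e2]]]]]] z_neq_v.
have [sal sal_beta] := sin_cone_up _ al_cone.
have sb := sin_beta_gt0; have cb := cos_beta_le0.
rewrite (config_low (partner_low hv)) /= in e1 e2.
have [hz|hz] := ltnP z half_n; first by rewrite (config_low hz) /= subrr in e2; nra.
rewrite (config_high hz) /= in e1 e2.
set X := (z - half_n)%:R * gap in e1 *; set Y := (v - half_n)%:R * gap in e1 *.
(* [sin (al - beta) >= 0]: [z] is on the left of the ray from [partner v]
   through [v], hence not to the right of [v]. *)
have X_le_Y : X - Y <= 0.
  have E1 : rho * cos al = X - Y + cos beta by rewrite -e1; ring.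
  have E2 : rho * sin al = sin beta by rewrite -e2; ring.
  have E : rho * sin (al - beta) = - (X - Y) * sin beta.
    rewrite sinB (_ : rho * _ = rho * sin al * cos beta - rho * cos al * sin beta); last by ring.
    by rewrite E1 E2; ring.
  have := mulr_ge0 (ltW rho_gt0) sal_beta; rewrite E => ?; nra.
have X_neq_Y : X - Y != 0.
  by apply: contra_notN z_neq_v; rewrite subr_eq0 => /eqP/gap_mul_inj; apply: high_inj.
(* The squared distance is [1 + (X - Y)^2 + 2 (X - Y) cos beta]. *)
have XY_sq : 0 < (X - Y) ^+ 2 by rewrite exprn_even_gt0.
have := cos2Dsin2 beta => cs.
rewrite /d /dist (config_low (partner_low hv)) (config_high hz) /= -/X -/Y.
by rewrite -{1}sqrtr1 ltr_sqrt; nra.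
Qed.

Lemma partner_EY (v : 'I_n) : (half_n <= v)%N -> EY k config (partner v) v.
Proof.
move=> hv; have dv := partner_dist hv.
split.
  split; last by rewrite dv.
  by move=> /(congr1 val) /=; have := half_n_gt0; lia.
exists cone_up; split.
  split; first exact: cone_up_lt.
  exists 1, beta; split; first exact: ltr01.
  split; first exact: beta_in_cone_up.
  by rewrite (config_low (partner_low hv)) (config_high hv) /=; split; ring.
move=> z _ z_cone; have [->|z_neq_v] := eqVneq z v; first exact: lexle_refl.
apply: lexle_lt_fst; rewrite !keyU_fst dv.
by apply: cone_up_partner_far => //; apply/eqP.
Qed.

Lemma EY_in_cone_down (v : 'I_n) : (half_n <= v)%N ->
  exists x, EY k config x v /\ inCone k config v cone_down x.
Proof. by move=> hv; exists (partner v); split; [exact: partner_EY|exact: partner_in_cone_down]. Qed.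

Lemma high_lt (i : 'I_half_n) : (i + half_n < n)%N.
Proof. by have := ltn_ord i; have := n_halves; lia. Qed.

Definition high (i : 'I_half_n) : 'I_n := Ordinal (high_lt i).

Lemma wt_ge_half_n (G : 'I_n -> 'I_n -> Prop) :
  (forall v : 'I_n, (half_n <= v)%N -> exists w, inCone k config v cone_down w /\ G w v) ->
  half_n%:R * sin beta <= wt config G.
Proof.
move=> G_cone; apply: (@wt_ge_heads _ _ _ _ _ high).
  by move=> i j /(congr1 val) /= /addIn; apply: val_inj.
move=> i; have hv : (half_n <= high i)%N by rewrite leq_addl.
have [w [w_cone Gw]] := G_cone _ hv.
have [w_low w_far] := cone_down_low hv w_cone.
by exists w; split => //; apply: leq_trans w_low hv.
Qed.

Lemma config_bounded (x : 'I_n) : `|(config x).1| <= 2 /\ `|(config x).2| <= 1.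
Proof.
have offset_le1 (y : nat) : (y <= n)%N -> `|y%:R * gap| <= 1.
  move=> hy; rewrite ger0_norm ?mulr_ge0 ?ler0n ?(ltW gap_gt0) //.
  by rewrite /gap ler_pdivrMr ?mul1r ?ler_nat // ltr0n; lia.
have x_le := ltnW (ltn_ord x).
rewrite /config; case: ifP => _ /=.
  by rewrite normr0 ler01; have := offset_le1 _ x_le; lra.
split; last exact: sin_max.
apply: le_trans (ler_normD _ _) _.
have := offset_le1 _ (leq_trans (leq_subr half_n x) x_le); have := cos_max beta; lra.
Qed.

Lemma config_dist_le6 (a b : 'I_n) : d config a b <= 6.
Proof.
apply: le_trans (dist_le_l1 _ _ _) _.
have [? ?] := config_bounded a; have [? ?] := config_bounded b.
have := ler_normB (config a).1 (config b).1; have := ler_normB (config a).2 (config b).2.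
lra.
Qed.

Lemma config_path_step (a b : 'I_n) : path_rel n a b -> nat_of_ord a != half_n.-1 ->
  d config a b <= gap.
Proof.
rewrite /path_rel => ba a_not_last.
apply: le_trans (dist_le_l1 _ _ _) _.
have [a_low|a_high] := ltnP a half_n.
  have b_low : (b < half_n)%N by rewrite ba; have := half_n_gt0; lia.
  rewrite (config_low a_low) (config_low b_low) /= ba -natr1 subrr normr0 addr0.
  by rewrite (_ : _ - _ = - gap) ?normrN ?gtr0_norm ?gap_gt0 //; ring.
have b_high : (half_n <= b)%N by rewrite ba; lia.
rewrite (config_high a_high) (config_high b_high) /= ba subSn // -natr1 subrr normr0 addr0.
by rewrite (_ : _ - _ = - gap) ?normrN ?gtr0_norm ?gap_gt0 //; ring.
Qed.

Lemma wt_path_config_le7 : wt config (path_rel n) <= 7.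
Proof.
have n_gt0 : (0 < n)%N by lia.
(* Only the bridge edge from the last a-node to the first b-node is long. *)
pose g (a : 'I_n) : R := if nat_of_ord a == half_n.-1 then 6 else gap.
apply: le_trans (@wt_path_rel_le n n_gt0 R config g _ _) _.
- by move=> a; rewrite /g; case: ifP => _; [|exact: ltW gap_gt0].
- move=> a b ab; rewrite /g; case: ifPn => [_|]; first exact: config_dist_le6.
  exact: config_path_step.
have last_lt : (half_n.-1 < n)%N by have := n_halves; lia.
have sum_gap : \sum_(a : 'I_n) gap = 1.
  by rewrite sumr_const card_ord -mulr_natl /gap mulfV // pnatr_eq0; lia.
rewrite (bigD1 (Ordinal last_lt)) //= {1}/g eqxx.
rewrite (eq_bigr (fun _ => gap)); last by move=> a /negPf; rewrite /g -val_eqE /= => ->.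
move: sum_gap; rewrite (bigD1 (Ordinal last_lt)) //=.
have := gap_gt0; lra.
Qed.

Lemma mst_scaled_le (T : 'I_n -> 'I_n -> Prop) : isMST config T ->
  sin beta / 14 * n%:R * wt config T <= half_n%:R * sin beta.
Proof.
move=> [_ T_min].
have wT : wt config T <= 7.
  exact: le_trans (T_min _ (path_rel_spanning _ (ltnW n_ge2))) wt_path_config_le7.
have sb := sin_beta_gt0.
have nE : n%:R = 2 * half_n%:R :> R by rewrite [in LHS]n_halves natrD; ring.
have c_ge0 : 0 <= sin beta / 14 * n%:R by rewrite mulr_ge0 ?ler0n ?divr_ge0 ?ltW.
apply: le_trans (ler_wpM2l c_ge0 wT) _.
suff -> : sin beta / 14 * n%:R * 7 = half_n%:R * sin beta by [].
by rewrite nE; field.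
Qed.

Lemma config_yao_weights (r : R) : 1 < r -> injective config /\
  forall T : 'I_n -> 'I_n -> Prop, isMST config T ->
    sin beta / 14 * n%:R * wt config T <= wt config (EYY k config) /\
    sin beta / 14 * n%:R * wt config T <= wt config (SinkStep k config (EY k config)) /\
    sin beta / 14 * n%:R * wt config T <= wt config (SinkStep k config (EYE k config r)).
Proof.
move=> r_gt1; split; first exact: config_inj.
move=> T /mst_scaled_le T_le.
split; [|split]; apply: le_trans T_le _; apply: wt_ge_half_n => v /EY_in_cone_down hv.
- exact: EYY_in_cone.
- exact: SinkStep_in_cone.
- by apply: SinkStep_in_cone; apply: EYE_in_cone.
Qed.

End Construction.

Theorem mainTheorem7 (R : realType) (k : nat) (r : R) :
  (6 <= k)%N -> 1 < r ->
  exists c : R, 0 < c /\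
  forall n : nat, ~~ odd n -> (2 <= n)%N ->
  exists p : 'I_n -> R * R, injective p /\
    forall T : 'I_n -> 'I_n -> Prop, isMST p T ->
      c * n%:R * wt p T <= wt p (EYY k p) /\
      c * n%:R * wt p T <= wt p (SinkStep k p (EY k p)) /\
      c * n%:R * wt p T <= wt p (SinkStep k p (EYE k p r)).
Proof.
move=> k_ge6 r_gt1; exists (sin (beta R k) / 14); split.
  by rewrite divr_gt0 // sin_beta_gt0.
move=> n n_even n_ge2; exists (config R k n).
exact: config_yao_weights.
Qed.
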